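(* Let $\Lambda_1,\Lambda_2\subset\mathbb{R}^d$ be almost-orthogonal planes, and let $v$ be a vector whose angle with each of $\Lambda_1$ and $\Lambda_2$ is at most $\alpha$, for some $0<\alpha\le\frac13$. Then the angle between $v$ and $\Lambda_1\cap\Lambda_2$ is at most $10\alpha$.
   Context: Planes are affine subspaces. The angle between a vector $v$ and a plane $\Lambda$ is the infimum of the angles between $v$ and vectors $w\in\Lambda-\Lambda$. Two planes $\Lambda_1,\Lambda_2\subset\mathbb{R}^d$ are almost-orthogonal if there is a basis $\{v_1,\dots,v_d\}$ of $\mathbb{R}^d$ and integers $0\le a\le b\le c\le d$ such that $v_1,\dots,v_b$ form an orthonormal basis of (the direction space of) $\Lambda_1$, $v_{a+1},\dots,v_c$ form an orthonormal basis of (the direction space of) $\Lambda_2$, every vector in the span of $\{v_1,\dots,v_a\}$ makes an angle in $[\pi/2-0.01,\pi/2+0.01]$ with $\Lambda_2$, and every vector in the span of $\{v_{b+1},\dots,v_d\}$ makes an angle in $[\pi/2-0.01,\pi/2+0.01]$ with $\Lambda_1$. *)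

From HB Require Import structures.
From mathcomp Require Import all_boot all_order all_algebra.
From mathcomp Require Import all_classical all_reals all_analysis.
Set Implicit Arguments. Unset Strict Implicit. Unset Printing Implicit Defensive.
Import Order.TTheory GRing.Theory Num.Theory.
Local Open Scope classical_set_scope.
Local Open Scope ring_scope.

Section Defs.
Context {R : realType} {d : nat}.

Definition dotv (v w : 'rV[R]_d) : R := (v *m w^T) 0 0.
Definition normv (v : 'rV[R]_d) : R := Num.sqrt (dotv v v).

Definition vangle (v w : 'rV[R]_d) : R := acos (dotv v w / (normv v * normv w)).

(* a plane = affine subspace: p + (row space of V) *)
Definition is_plane (L : set 'rV[R]_d) : Prop :=
  exists (p : 'rV[R]_d) (V : 'M[R]_d), L = [set x | (x - p <= V)%MS].

(* difference set L - L (the direction space of a plane) *)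
Definition diffset (L : set 'rV[R]_d) : set 'rV[R]_d :=
  [set z | exists x y, L x /\ L y /\ z = x - y].

(* angle between v and a plane L: infimum of angles between v and nonzero
   w in L - L; by convention pi/2 when L - L has no nonzero vector. *)
Definition angle_plane (v : 'rV[R]_d) (L : set 'rV[R]_d) : R :=
  let D := [set w | diffset L w /\ w != 0] in
  if `[< D !=set0 >] then inf [set vangle v w | w in D] else pi / 2.

Definition span_rows (B : 'M[R]_d) (P : pred 'I_d) : set 'rV[R]_d :=
  [set x | exists c : 'rV[R]_d, (forall i, ~~ P i -> c 0 i = 0) /\ x = c *m B].

Definition orthonormal_rows (B : 'M[R]_d) (P : pred 'I_d) : Prop :=
  forall i j, P i -> P j -> dotv (row i B) (row j B) = (i == j)%:R.

Definition onb_dir (B : 'M[R]_d) (P : pred 'I_d) (L : set 'rV[R]_d) : Prop :=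
  orthonormal_rows B P /\ span_rows B P = diffset L.

Definition almost_orthogonal (L1 L2 : set 'rV[R]_d) : Prop :=
  exists (B : 'M[R]_d) (a b c : nat),
    [/\ row_free B, (a <= b <= c)%N && (c <= d)%N,
        onb_dir B (fun i : 'I_d => (i < b)%N) L1,
        onb_dir B (fun i : 'I_d => (a <= i < c)%N) L2 &
        (forall u, span_rows B (fun i : 'I_d => (i < a)%N) u -> u != 0 ->
           pi / 2 - 100^-1 <= angle_plane u L2 <= pi / 2 + 100^-1) /\
        (forall u, span_rows B (fun i : 'I_d => (b <= i)%N) u -> u != 0 ->
           pi / 2 - 100^-1 <= angle_plane u L1 <= pi / 2 + 100^-1)].

End Defs.

(* If 10 alpha >= pi/2 there is nothing to prove, since angles with planes never
   exceed pi/2; otherwise alpha < pi/20.  Put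
   t = 5 alpha / 4 > alpha.  There are directions w1 of L1 and w2 of L2 at angle
   < t from v, so v is within s = sin t |v| of multiples x1, x2 of them.  In the
   almost-orthogonal frame write x1 = A + m (coordinates < a, resp. in [a, b)) and
   x2 = m' + C (coordinates < b, resp. in [b, c)).  Then m is a direction of both
   planes, A and C are orthogonal to m and m', and A, C are almost orthogonal.
   Pairing v = A + m + r1 = m' + C + r2 with A and with C gives
   0.99 |A| <= |r1| + |r2| <= 2 s, so |v - m| <= 3.1 s, and double-angle
   computations turn this into angle(v, m) <= 8 t = 10 alpha. *)

From HB Require Import structures.
From mathcomp Require Import all_boot all_order all_algebra.
From mathcomp Require Import all_classical all_reals all_analysis.
From mathcomp Require Import ring lra zify.
Import Order.TTheory GRing.Theory Num.Theory.
Import numFieldNormedType.Exports.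
Local Open Scope classical_set_scope.
Local Open Scope ring_scope.

Section InnerProduct.
Context {R : realType} {d : nat}.
Implicit Types u v w : 'rV[R]_d.

Lemma dotvE u w : dotv u w = \sum_i u 0 i * w 0 i.
Proof. by rewrite /dotv !mxE; apply: eq_bigr => i _; rewrite mxE. Qed.

Lemma dotvC u w : dotv u w = dotv w u.
Proof. by rewrite !dotvE; apply: eq_bigr => i _; rewrite mulrC. Qed.

Lemma dotvDl u v w : dotv (u + v) w = dotv u w + dotv v w.
Proof. by rewrite !dotvE -big_split; apply: eq_bigr => i _; rewrite mxE mulrDl. Qed.

Lemma dotvZl a u w : dotv (a *: u) w = a * dotv u w.
Proof. by rewrite !dotvE mulr_sumr; apply: eq_bigr => i _; rewrite mxE mulrA. Qed.

Lemma dotvNl u w : dotv (- u) w = - dotv u w.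
Proof. by rewrite -scaleN1r dotvZl mulN1r. Qed.

Lemma dotvBl u v w : dotv (u - v) w = dotv u w - dotv v w.
Proof. by rewrite dotvDl dotvNl. Qed.

Lemma dotvDr u v w : dotv w (u + v) = dotv w u + dotv w v.
Proof. by rewrite dotvC dotvDl !(dotvC w). Qed.

Lemma dotvZr a u w : dotv w (a *: u) = a * dotv w u.
Proof. by rewrite dotvC dotvZl dotvC. Qed.

Lemma dotvNr u w : dotv w (- u) = - dotv w u.
Proof. by rewrite dotvC dotvNl dotvC. Qed.

Lemma dotvBr u v w : dotv w (u - v) = dotv w u - dotv w v.
Proof. by rewrite dotvDr dotvNr. Qed.

Lemma dotv0l w : dotv 0 w = 0.
Proof. by rewrite -(scale0r 0) dotvZl mul0r. Qed.

Lemma dotv0r w : dotv w 0 = 0.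
Proof. by rewrite dotvC dotv0l. Qed.

Lemma dotv_suml (I : finType) (F : I -> 'rV[R]_d) w :
  dotv (\sum_i F i) w = \sum_i dotv (F i) w.
Proof. by apply: (big_morph (dotv^~ w)) => [x y|]; rewrite ?dotvDl ?dotv0l. Qed.

Lemma dotv_sumr (I : finType) (F : I -> 'rV[R]_d) w :
  dotv w (\sum_i F i) = \sum_i dotv w (F i).
Proof. by rewrite dotvC dotv_suml; apply: eq_bigr => i _; rewrite dotvC. Qed.

Lemma dotvv_ge0 u : 0 <= dotv u u.
Proof. by rewrite dotvE sumr_ge0 // => i _; rewrite -expr2 sqr_ge0. Qed.

Lemma dotvv_eq0 u : (dotv u u == 0) = (u == 0).
Proof.
apply/idP/idP => [|/eqP->]; last by rewrite dotv0l.
rewrite dotvE psumr_eq0 => [/allP u0|i _]; last by rewrite -expr2 sqr_ge0.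
apply/eqP/rowP => i; apply/eqP; rewrite mxE -sqrf_eq0 expr2.
exact: u0 (mem_index_enum _).
Qed.

Lemma normv0 : normv (0 : 'rV[R]_d) = 0.
Proof. by rewrite /normv dotv0l sqrtr0. Qed.

Lemma normv_ge0 u : 0 <= normv u.
Proof. exact: sqrtr_ge0. Qed.

Lemma normv_sqr u : normv u ^+ 2 = dotv u u.
Proof. by rewrite sqr_sqrtr // dotvv_ge0. Qed.

Lemma normv_gt0 u : (0 < normv u) = (u != 0).
Proof. by rewrite sqrtr_gt0 lt_def dotvv_eq0 dotvv_ge0 andbT. Qed.

Lemma normvN u : normv (- u) = normv u.
Proof. by rewrite /normv dotvNl dotvNr opprK. Qed.

Lemma normv_sub_proj v w : w != 0 ->
  normv (v - (dotv v w / dotv w w) *: w) ^+ 2 = dotv v v - dotv v w ^+ 2 / dotv w w.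
Proof.
move=> w0; have ww0 : dotv w w != 0 by rewrite dotvv_eq0.
rewrite normv_sqr !(dotvBl, dotvBr, dotvZl, dotvZr) (dotvC w v).
by field.
Qed.

Lemma dotv_sqr_le u w : dotv u w ^+ 2 <= dotv u u * dotv w w.
Proof.
have [->|w0] := eqVneq w 0; first by rewrite dotv0r dotv0r expr0n mulr0.
have ww_gt0 : 0 < dotv w w by rewrite -normv_sqr exprn_gt0 ?normv_gt0.
have := sqr_ge0 (normv (u - (dotv u w / dotv w w) *: w)).
by rewrite normv_sub_proj // subr_ge0 ler_pdivrMr // mulrC.
Qed.

Lemma normr_dotv_le u w : `|dotv u w| <= normv u * normv w.
Proof.
rewrite -(@ler_pXn2r _ 2) ?nnegrE ?mulr_ge0 ?normv_ge0 //.
by rewrite exprMn !normv_sqr real_normK ?num_real // dotv_sqr_le.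
Qed.

Lemma normvD u w : normv (u + w) <= normv u + normv w.
Proof.
rewrite -(@ler_pXn2r _ 2) ?nnegrE ?addr_ge0 ?normv_ge0 //.
rewrite normv_sqr dotvDl !dotvDr (dotvC w u) sqrrD !normv_sqr.
have := le_trans (ler_norm _) (normr_dotv_le u w); lra.
Qed.

Lemma two_decompositions_normv_le {A C m1 m2 r1 r2 : 'rV[R]_d} {e : R} :
  0 <= e < 1 -> A + m1 + r1 = m2 + C + r2 ->
  dotv A m1 = 0 -> dotv A m2 = 0 -> dotv C m1 = 0 -> dotv C m2 = 0 ->
  `|dotv A C| <= e * (normv A * normv C) ->
  (1 - e) * normv A <= normv r1 + normv r2.
Proof.
move=> /andP[e0 e1] eq Am1 Am2 Cm1 Cm2.
have dotA : dotv A A + dotv A r1 = dotv A C + dotv A r2.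
  by move/(congr1 (dotv A)): eq; rewrite !dotvDr Am1 Am2 addr0 add0r.
have dotC : dotv A C + dotv C r1 = dotv C C + dotv C r2.
  by move/(congr1 (dotv C)): eq; rewrite !dotvDr Cm1 Cm2 addr0 add0r dotvC.
rewrite -!normv_sqr in dotA dotC.
move: (normr_dotv_le A r1) (normr_dotv_le A r2) (normr_dotv_le C r1) (normr_dotv_le C r2).
rewrite !ler_norml => /andP[Ar1 _] /andP[_ Ar2] /andP[_ Cr1] /andP[Cr2 _] /andP[_ AC].
have sq_le (x K : R) : 0 <= x -> 0 <= K -> x ^+ 2 <= x * K -> x <= K.
  by rewrite le_eqVlt => /orP[/eqP<- //|x0] _; rewrite expr2 ler_pM2l.
have [a0 c0] := (normv_ge0 A, normv_ge0 C).
have s0 := addr_ge0 (normv_ge0 r1) (normv_ge0 r2).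
have le_a : normv A <= e * normv C + (normv r1 + normv r2).
  by apply: sq_le => //; [rewrite addr_ge0 ?mulr_ge0 | lra].
have le_c : normv C <= e * normv A + (normv r1 + normv r2).
  by apply: sq_le => //; [rewrite addr_ge0 ?mulr_ge0 | lra].
nra.
Qed.

End InnerProduct.

Section Trigonometry.
Context {R : realType}.
Implicit Types x y : R.

Lemma ler_cos : {in `[0, pi] &, {mono (@cos R) : x y /~ y <= x}}.
Proof. by move=> x y xI yI /=; rewrite !leNgt ltr_cos. Qed.

Lemma sin_le x : 0 <= x -> sin x <= x.
Proof.
move=> x0.
have [c _] : exists2 c, c \in `[0, x] & sin x - sin 0 = cos c * (x - 0).
  apply: (@MVT_segment R sin cos 0 x x0).
  by apply: continuous_subspaceT => y; exact: continuous_sin.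
by rewrite sin0 !subr0 => ->; rewrite ler_piMl // cos_le1.
Qed.

Lemma cos_8_le x : 0 <= x <= 1/4 -> cos (8 * x) <= 1 - (31/10) ^+ 2 * sin x ^+ 2.
Proof.
move=> /andP[x0 x_le].
have [sin_ge0 sin_le_x] : 0 <= sin x /\ sin x <= x.
  split; last exact: sin_le.
  by apply: sin_ge0_pi; rewrite x0 (le_trans x_le) // (le_trans _ (pi_ge2 _)) //; lra.
have -> : 8 * x = x *+ 2 *+ 2 *+ 2 by rewrite -!mulrnA mulr_natl.
rewrite !cos_mulr2n cos2sin2.
have : sin x ^+ 2 <= 1/16 by nra.
have : 0 <= sin x ^+ 2 by exact: sqr_ge0.
move: (sin x ^+ 2) => S S0 S1.
nra.
Qed.

End Trigonometry.

Section Angles.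
Context {R : realType} {d : nat}.
Implicit Types u v w : 'rV[R]_d.

Lemma cosine_ratio_itv u w : -1 <= dotv u w / (normv u * normv w) <= 1.
Proof.
have [->|u0] := eqVneq u 0; first by rewrite dotv0l mul0r; lra.
have [->|w0] := eqVneq w 0; first by rewrite dotv0r mul0r; lra.
have uw : 0 < normv u * normv w by rewrite mulr_gt0 ?normv_gt0.
by rewrite ler_pdivlMr // ler_pdivrMr // mul1r mulN1r -ler_norml normr_dotv_le.
Qed.

Lemma vangle_itv u w : vangle u w \in `[0, pi].
Proof.
have := cosine_ratio_itv u w.
by rewrite in_itv /= => /[dup] /acos_ge0 -> /acos_lepi ->.
Qed.

Lemma cos_vangle u w : cos (vangle u w) = dotv u w / (normv u * normv w).
Proof. by rewrite /vangle acosK // in_itv /= cosine_ratio_itv. Qed.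

Lemma vangle_le u w t : t \in `[0, pi] ->
  (vangle u w <= t) = (cos t <= dotv u w / (normv u * normv w)).
Proof. by move=> tI; rewrite -cos_vangle ler_cos ?vangle_itv. Qed.

Lemma vangle_lt u w t : t \in `[0, pi] ->
  (vangle u w < t) = (cos t < dotv u w / (normv u * normv w)).
Proof. by move=> tI; rewrite -cos_vangle ltr_cos ?vangle_itv. Qed.

Lemma pihalf_itv : pi / 2 \in `[0, pi :> R].
Proof.
by rewrite in_itv /= divr_ge0 ?pi_ge0 // ler_pdivrMr // ler_peMr ?pi_ge0 ?ler1n.
Qed.

Lemma vangle_le_pihalf_or_opp u w : vangle u w <= pi / 2 \/ vangle u (- w) <= pi / 2.
Proof.
rewrite !vangle_le ?pihalf_itv // cos_pihalf normvN dotvNr mulNr oppr_ge0.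
by case: (lerP 0 (dotv u w / (normv u * normv w))) => h; [left | right; exact: ltW].
Qed.

Lemma exists_normv_sub_le_sin {v w t} : w != 0 -> 0 <= t <= pi / 2 ->
  vangle v w < t -> exists k, normv (v - k *: w) <= sin t * normv v.
Proof.
move=> w0 /andP[t0 t_le].
have tI : t \in `[0, pi] by rewrite in_itv /= t0 (le_trans t_le) // (itvP pihalf_itv).
have [->|v0] := eqVneq v 0; first by exists 0; rewrite scale0r subr0 normv0 mulr0.
have uw : 0 < normv v * normv w by rewrite mulr_gt0 ?normv_gt0.
rewrite vangle_lt // => cos_lt.
have cos_ge0 : 0 <= cos t.
  by rewrite cos_ge0_pihalf // t_le (le_trans _ t0) // oppr_le0 (itvP pihalf_itv).
exists (dotv v w / dotv w w).
rewrite -(@ler_pXn2r _ 2) ?nnegrE ?mulr_ge0 ?normv_ge0 ?sin_ge0_pi ?(itvP tI) //.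
rewrite normv_sub_proj // exprMn sin2cos2 -!normv_sqr.
set x := dotv v w / (normv v * normv w) in cos_lt.
have -> : dotv v w = x * (normv v * normv w) by rewrite /x divfK ?gt_eqF.
have nw0 : normv w != 0 by rewrite gt_eqF ?normv_gt0.
rewrite [_ / _](_ : _ = x ^+ 2 * normv v ^+ 2); last by field.
rewrite -{1}(mul1r (normv v ^+ 2)) -mulrBl ler_wpM2r ?sqr_ge0 // lerD2l lerN2.
by rewrite ler_pXn2r ?nnegrE ?(ltW cos_lt) // (le_trans cos_ge0 (ltW cos_lt)).
Qed.

Lemma vangle_le_of_normv_sub_le v m T t : m != 0 -> 0 <= T <= 1 ->
  normv (v - m) <= T * normv v -> t \in `[0, pi] -> cos t <= 1 - T ^+ 2 ->
  vangle v m <= t.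
Proof.
move=> m0 /andP[T0 T1] vm tI cos_le.
have v0 : v != 0.
  apply: contraTneq vm => ->; rewrite sub0r normvN normv0 mulr0.
  by rewrite -ltNge normv_gt0.
have vm_gt0 : 0 < normv v * normv m by rewrite mulr_gt0 ?normv_gt0.
rewrite vangle_le // (le_trans cos_le) // ler_pdivlMr //.
have : normv (v - m) ^+ 2 <= (T * normv v) ^+ 2.
  by rewrite ler_pXn2r ?nnegrE ?mulr_ge0 ?normv_ge0.
rewrite normv_sqr dotvBl !dotvBr (dotvC m v) -!normv_sqr => vm2.
(* 2 <v, m> >= (1 - T^2) |v|^2 + |m|^2 >= 2 (1 - T^2) |v| |m|, as the difference of
   the last two is (1 - T^2) (|v| - |m|)^2 + T^2 |m|^2. *)
have T2 : 0 <= 1 - T ^+ 2 by rewrite subr_ge0 expr_le1.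
have := mulr_ge0 T2 (sqr_ge0 (normv v - normv m)).
have := sqr_ge0 (T * normv m).
nra.
Qed.

Lemma vangle_le_8_of_normv_sub_le {v m t} : v != 0 -> 0 <= t <= 1 / 4 ->
  normv (v - m) <= 31 / 10 * sin t * normv v -> m != 0 /\ vangle v m <= 8 * t.
Proof.
move=> v0 /andP[t0 t_le]; have pi2 := @pi_ge2 R.
have sin_ge0 : 0 <= sin t by apply: sin_ge0_pi; apply/andP; split; lra.
have sin_le_t := sin_le _ t0.
set T := 31 / 10 * sin t => near.
have T_itv : 0 <= T <= 1 by apply/andP; split; rewrite /T; lra.
have m0 : m != 0.
  apply: contraTneq near => ->; rewrite subr0 -ltNge -subr_gt0 -{1}(mul1r (normv v)).
  by rewrite -mulrBl mulr_gt0 ?normv_gt0 // subr_gt0 /T; lra.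
split=> //; apply: vangle_le_of_normv_sub_le m0 T_itv near _ _.
  by rewrite in_itv /=; apply/andP; split; lra.
by rewrite /T exprMn cos_8_le ?t0.
Qed.

End Angles.

Section Planes.
Context {R : realType} {d : nat}.
Implicit Types (u v w : 'rV[R]_d) (L : set 'rV[R]_d).

Lemma diffsetN L w : diffset L w -> diffset L (- w).
Proof. by move=> [x [y [Lx [Ly ->]]]]; exists y, x; rewrite opprB. Qed.

Lemma diffset_row_space p (V : 'M[R]_d) w :
  diffset [set x | (x - p <= V)%MS] w <-> (w <= V)%MS.
Proof.
split=> [[x [y [/= xV [/= yV ->]]]]|wV].
  have -> : x - y = (x - p) - (y - p) by rewrite opprB addrA subrK.
  by rewrite addmx_sub // eqmx_opp.
by exists (w + p), p; rewrite /= addrK subrr sub0mx.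
Qed.

Lemma diffsetZ {L} k {w} : is_plane L -> diffset L w -> diffset L (k *: w).
Proof. by move=> [p [V ->]]; rewrite !diffset_row_space; exact: scalemx_sub. Qed.

Lemma plane_addr L x w : is_plane L -> L x -> diffset L w -> L (x + w).
Proof.
move=> [p [V ->]] /= xV; rewrite diffset_row_space => wV.
by rewrite addrAC addmx_sub.
Qed.

Lemma diffsetI {L1 L2 w} : is_plane L1 -> is_plane L2 -> L1 `&` L2 !=set0 ->
  diffset L1 w -> diffset L2 w -> diffset (L1 `&` L2) w.
Proof.
move=> P1 P2 [q [L1q L2q]] L1w L2w.
exists (q + w), q; split; first by split; apply: plane_addr.
by split; [split | rewrite addrAC subrr add0r].
Qed.

Lemma angle_plane_le_vangle u L w : diffset L w -> w != 0 ->
  angle_plane u L <= vangle u w.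
Proof.
move=> Lw w0; rewrite /angle_plane asboolT; last by exists w.
apply: ge_inf; last by exists w.
by exists 0 => _ [z _ <-]; rewrite (itvP (vangle_itv u z)).
Qed.

Lemma exists_vangle_lt {u L t} : angle_plane u L < t -> t <= pi / 2 ->
  exists w, [/\ diffset L w, w != 0 & vangle u w < t].
Proof.
rewrite /angle_plane; case: asboolP => [[w Lw]|_ /lt_le_trans/[apply]]; last first.
  by rewrite ltxx.
have nonempty : [set vangle u w | w in [set w | diffset L w /\ w != 0]] !=set0.
  by exists (vangle u w), w.
by move=> /(inf_lt nonempty)[_ [z [Lz z0] <-] lt_t] _; exists z.
Qed.

Lemma angle_plane_le_pihalf u L : angle_plane u L <= pi / 2.
Proof.
have [[w [Lw w0]]|empty] := pselect ([set w | diffset L w /\ w != 0] !=set0).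
  case: (vangle_le_pihalf_or_opp u w); apply: le_trans.
    exact: angle_plane_le_vangle.
  by apply: angle_plane_le_vangle; [exact: diffsetN | rewrite oppr_eq0].
by rewrite /angle_plane asboolF.
Qed.

Lemma normr_dotv_le_of_angle_plane u L w e : 0 <= e <= pi / 2 ->
  (u != 0 -> pi / 2 - e <= angle_plane u L) -> diffset L w ->
  `|dotv u w| <= e * (normv u * normv w).
Proof.
move=> /andP[e0 e_le] far Lw.
have [->|u0] := eqVneq u 0; first by rewrite dotv0l normr0 !mulr_ge0 ?normv_ge0.
have [->|w0] := eqVneq w 0; first by rewrite dotv0r normr0 !mulr_ge0 ?normv_ge0.
have dotv_le z : diffset L z -> z != 0 -> dotv u z <= e * (normv u * normv z).
  move=> Lz z0; have uz : 0 < normv u * normv z by rewrite mulr_gt0 ?normv_gt0.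
  have far_z := le_trans (far u0) (angle_plane_le_vangle u _ _ Lz z0).
  have : cos (vangle u z) <= cos (pi / 2 - e).
    rewrite ler_cos ?vangle_itv // in_itv /=.
    by apply/andP; split; have := @pi_ge2 R; lra.
  rewrite cos_vangle -cosN opprB cosBpihalf ler_pdivrMr // => /le_trans; apply.
  by rewrite ler_wpM2r ?sin_le // ltW.
rewrite ler_norml dotv_le // andbT lerNl -dotvNr -(normvN w) dotv_le ?oppr_eq0 //.
exact: diffsetN.
Qed.

End Planes.

Section OrthonormalRows.
Context {R : realType} {d : nat}.
Implicit Types (c : 'rV[R]_d) (P Q : pred 'I_d).

Definition supported_on c P := forall i, ~~ P i -> c 0 i = 0.

Definition rmask P c : 'rV[R]_d := \row_i (if P i then c 0 i else 0).

Lemma rmask_split P c : c = rmask P c + rmask (predC P) c.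
Proof. by apply/rowP => i; rewrite !mxE /=; case: (P i); rewrite ?addr0 ?add0r. Qed.

Lemma supported_onW {c P} Q : supported_on c P -> (forall i, P i -> Q i) ->
  supported_on c Q.
Proof. by move=> cP PQ i nQi; apply: cP; apply: contra nQi; exact: PQ. Qed.

Lemma supported_on_rmask P {Q Q' c} : supported_on c Q ->
  (forall i, P i -> Q i -> Q' i) -> supported_on (rmask P c) Q'.
Proof.
move=> cQ PQQ' i nQ'i; rewrite mxE; case: ifP => // Pi.
by apply: cQ; apply: contra nQ'i; exact: PQQ'.
Qed.

Lemma dotv_eq0_of_disjoint P Q c c' : supported_on c P -> supported_on c' Q ->
  (forall i, P i -> Q i -> False) -> dotv c c' = 0.
Proof.
move=> cP c'Q PQ; rewrite dotvE big1 // => i _.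
case: (boolP (P i)) => [Pi|/cP ->]; last by rewrite mul0r.
case: (boolP (Q i)) => [Qi|/c'Q ->]; last by rewrite mulr0.
by case: (PQ i Pi Qi).
Qed.

Lemma dotv_mulmx_orthonormal {B : 'M[R]_d} {P c c'} : orthonormal_rows B P ->
  supported_on c P -> supported_on c' P -> dotv (c *m B) (c' *m B) = dotv c c'.
Proof.
move=> oB cP c'P.
have term i j :
    c 0 i * (c' 0 j * dotv (row i B) (row j B)) = c 0 i * c' 0 j * (i == j)%:R.
  case: (boolP (P i)) => [Pi|/cP ->]; last by rewrite !mul0r.
  case: (boolP (P j)) => [Pj|/c'P ->]; last by rewrite mul0r mulr0 mul0r.
  by rewrite oB // mulrA.
rewrite (mulmx_sum_row c) (mulmx_sum_row c') dotv_suml dotvE.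
apply: eq_bigr => i _; rewrite dotvZl dotv_sumr mulr_sumr (bigD1 i) //= big1.
  by rewrite dotvZr term eqxx mulr1 addr0.
by move=> j ji; rewrite dotvZr term eq_sym (negbTE ji) mulr0.
Qed.

Lemma dotv_mulmx_eq0 {B : 'M[R]_d} {P Q Q' c c'} : orthonormal_rows B P ->
  supported_on c Q -> supported_on c' Q' ->
  (forall i, Q i -> P i) -> (forall i, Q' i -> P i) -> (forall i, Q i -> Q' i -> False) ->
  dotv (c *m B) (c' *m B) = 0.
Proof.
move=> oB cQ c'Q' QP Q'P QQ'.
rewrite (dotv_mulmx_orthonormal oB (supported_onW _ cQ QP) (supported_onW _ c'Q' Q'P)).
exact: dotv_eq0_of_disjoint cQ c'Q' QQ'.
Qed.

End OrthonormalRows.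

Section AlmostOrthogonalFrame.
Context {R : realType} {d : nat}.
Context {B : 'M[R]_d} {a b c : nat} {L1 L2 : set 'rV[R]_d}.
Hypotheses (le_ab : (a <= b)%N) (le_bc : (b <= c)%N)
  (onb1 : onb_dir B (fun i : 'I_d => (i < b)%N) L1)
  (onb2 : onb_dir B (fun i : 'I_d => (a <= i < c)%N) L2)
  (far : forall u, span_rows B (fun i : 'I_d => (i < a)%N) u -> u != 0 ->
     pi / 2 - 100^-1 <= angle_plane u L2).

Lemma normr_dotv_far_le u w : span_rows B (fun i : 'I_d => (i < a)%N) u ->
  diffset L2 w -> `|dotv u w| <= 100^-1 * (normv u * normv w).
Proof.
move=> su; apply: normr_dotv_le_of_angle_plane => [|u0]; last exact: far.
by apply/andP; split; have := @pi_ge2 R; lra.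
Qed.

Lemma exists_common_direction_near {v x1 x2 : 'rV[R]_d} {s : R} :
  diffset L1 x1 -> diffset L2 x2 -> normv (v - x1) <= s -> normv (v - x2) <= s ->
  exists m, [/\ diffset L1 m, diffset L2 m & normv (v - m) <= 31/10 * s].
Proof.
case: onb1 onb2 => [orth1 sp1] [orth2 sp2].
rewrite -sp1 -sp2 => -[c1 [c1P ->]] -[c2 [c2P ->]] near1 near2.
pose A := rmask (fun i : 'I_d => (i < a)%N) c1.
pose M1 := rmask (predC (fun i : 'I_d => (i < a)%N)) c1.
pose M2 := rmask (fun i : 'I_d => (i < b)%N) c2.
pose C := rmask (predC (fun i : 'I_d => (i < b)%N)) c2.
have sA : supported_on A (fun i : 'I_d => (i < a)%N) by apply: supported_on_rmask c1P _.
have sM1 : supported_on M1 (fun i : 'I_d => (a <= i < b)%N).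
  by apply: supported_on_rmask c1P _ => i /=; lia.
have sM2 : supported_on M2 (fun i : 'I_d => (a <= i < b)%N).
  by apply: supported_on_rmask c2P _ => i /=; lia.
have sC : supported_on C (fun i : 'I_d => (b <= i < c)%N).
  by apply: supported_on_rmask c2P _ => i /=; lia.
have AM1 : dotv (A *m B) (M1 *m B) = 0.
  by apply: (dotv_mulmx_eq0 orth1 sA sM1) => i /=; lia.
have AM2 : dotv (A *m B) (M2 *m B) = 0.
  by apply: (dotv_mulmx_eq0 orth1 sA sM2) => i /=; lia.
have CM1 : dotv (C *m B) (M1 *m B) = 0.
  by apply: (dotv_mulmx_eq0 orth2 sC sM1) => i /=; lia.
have CM2 : dotv (C *m B) (M2 *m B) = 0.
  by apply: (dotv_mulmx_eq0 orth2 sC sM2) => i /=; lia.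
have AC : `|dotv (A *m B) (C *m B)| <= 100^-1 * (normv (A *m B) * normv (C *m B)).
  apply: normr_dotv_far_le; first by exists A.
  by rewrite -sp2; exists C; split=> //; apply: supported_onW sC _ => i /=; lia.
have c1E : A *m B + M1 *m B = c1 *m B by rewrite -mulmxDl -rmask_split.
have c2E : M2 *m B + C *m B = c2 *m B by rewrite -mulmxDl -rmask_split.
have e_itv : 0 <= (100^-1 : R) < 1 by apply/andP; split; lra.
have eqv : A *m B + M1 *m B + (v - c1 *m B) = M2 *m B + C *m B + (v - c2 *m B).
  by rewrite c1E c2E addrCA subrr addr0 addrCA subrr addr0.
have A_le := two_decompositions_normv_le e_itv eqv AM1 AM2 CM1 CM2 AC.
exists (M1 *m B); split.
- by exists M1; split=> //; apply: supported_onW sM1 _ => i /=; lia.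
- by exists M1; split=> //; apply: supported_onW sM1 _ => i /=; lia.
have -> : v - M1 *m B = A *m B + (v - c1 *m B).
  by rewrite -c1E opprD addrCA addNKr.
apply: le_trans (normvD _ _) _.
by have := normv_ge0 (A *m B); lra.
Qed.

End AlmostOrthogonalFrame.

Theorem lemma5 (R : realType) (d : nat) (L1 L2 : set 'rV[R]_d)
    (v : 'rV[R]_d) (alpha : R) :
  is_plane L1 -> is_plane L2 -> L1 `&` L2 !=set0 ->
  almost_orthogonal L1 L2 ->
  v != 0 -> 0 < alpha -> alpha <= 3^-1 ->
  angle_plane v L1 <= alpha -> angle_plane v L2 <= alpha ->
  angle_plane v (L1 `&` L2) <= 10 * alpha.
Proof.
move=> P1 P2 L12 [B [a [b [c [_ /andP[/andP[le_ab le_bc] _] onb1 onb2 [far _]]]]]].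
move=> v0 alpha_gt0 _ v_L1 v_L2.
have [big|small] := lerP (pi / 2) (10 * alpha).
  exact: le_trans (angle_plane_le_pihalf _ _) big.
have far_lo u : span_rows B (fun i : 'I_d => (i < a)%N) u -> u != 0 ->
    pi / 2 - 100^-1 <= angle_plane u L2.
  by move=> /far/[apply]/andP[].
pose t := alpha * (5 / 4).
have [t_itv t_le alpha_lt] : [/\ 0 <= t <= pi / 2, 0 <= t <= 1 / 4 & alpha < t].
  by have := @pihalf_lt2 R; rewrite /t; split; try apply/andP; try split; lra.
have t_le_pihalf : t <= pi / 2 by case/andP: t_itv.
have [w1 [L1w1 w10 vw1]] := exists_vangle_lt (le_lt_trans v_L1 alpha_lt) t_le_pihalf.
have [w2 [L2w2 w20 vw2]] := exists_vangle_lt (le_lt_trans v_L2 alpha_lt) t_le_pihalf.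
have [k1 near1] := exists_normv_sub_le_sin w10 t_itv vw1.
have [k2 near2] := exists_normv_sub_le_sin w20 t_itv vw2.
have [m [L1m L2m near]] := exists_common_direction_near le_ab le_bc onb1 onb2 far_lo
  (diffsetZ k1 P1 L1w1) (diffsetZ k2 P2 L2w2) near1 near2.
rewrite mulrA in near; have [m0 vm] := vangle_le_8_of_normv_sub_le v0 t_le near.
apply: le_trans (angle_plane_le_vangle v _ _ (diffsetI P1 P2 L12 L1m L2m) m0) _.
by apply: le_trans vm _; rewrite /t; lra.
Qed.
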